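(* Let $G$ be a graph with $m\ge1$ edges, let $k\ge1$ and $0\le p\le m$ be integers, $\ell=m-p$, and $\eta=2^k(\ell+2)$. Let $E$ be the classification instance $E(G,\eta)$ described in the context. Then $G$ has a set $U\subseteq V(G)$ with $|U|\le k$ that is incident to at least $p$ edges if and only if there is a decision tree $T$ with $dep(T)\le k$ and $|O(T,E)|\le \ell\eta$.
   Context: Fix an ordering $e_1,\dots,e_m$ of $E(G)$. For a positive integer $\eta$, $E(G,\eta)$ has features $V(G)\cup\{d_0\}$ and, for each $r\in[\eta]$ and $i\in[m]$: a negative example with $d_0=2m(r-1)+2i-1$ and, for each $v\in V(G)$, value $1$ if $v$ is an endpoint of $e_i$ and $0$ otherwise; and a positive example with $d_0=2m(r-1)+2i$ and value $0$ on every vertex feature. A decision tree (DT) is a rooted tree whose test nodes $v$ carry a feature $f(v)$ and integer threshold $\lambda(v)$ (examples with $e(f(v))\le\lambda(v)$ go left, others right) and whose leaves are labeled positive or negative. $dep(T)$ is the maximum number of test nodes on a root-to-leaf path. An example is an outlier for $T$ if it reaches a leaf with the opposite label; $O(T,E)$ is the set of outliers. *)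

From mathcomp Require Import all_boot all_order all_algebra.
Set Implicit Arguments. Unset Strict Implicit. Unset Printing Implicit Defensive.
Import Order.TTheory GRing.Theory Num.Theory.

(* A simple graph on the finite vertex type V with m edges given in a fixed
   order e_1,...,e_m: edge i is [edges i], a 2-element vertex set, and
   distinct indices give distinct edges. *)
Definition simple_graph (V : finType) (m : nat) (edges : 'I_m -> {set V}) :=
  (forall i, #|edges i| = 2) /\ injective edges.

(* Features: [Some v] for the vertex feature v, [None] for d_0. *)
Definition feature (V : finType) := option V.

(* An example: value of each feature, and label (true = positive). *)
Definition example (V : finType) := ((feature V -> int) * bool)%type.

Inductive DT (F : Type) :=
| Leaf of bool
| Node of F & int & DT F & DT F.
Arguments Leaf {F}.

Fixpoint dep F (T : DT F) : nat :=
  match T with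
  | Leaf _ => 0
  | Node _ _ l r => (maxn (dep l) (dep r)).+1
  end.

Fixpoint classify F (T : DT F) (x : F -> int) : bool :=
  match T with
  | Leaf b => b
  | Node f t l r => if (x f <= t)%R then classify l x else classify r x
  end.

Definition is_outlier F (T : DT F) (ex : ((F -> int) * bool)%type) : bool :=
  classify T ex.1 != ex.2.

(* |O(T,E)| : number of examples of E (listed as a sequence, all distinct
   here since their d_0 values are distinct) that are outliers. *)
Definition num_outliers F (T : DT F) (E : seq ((F -> int) * bool)) : nat :=
  count (is_outlier T) E.

(* The instance E(G, eta); r ranges over 1..eta (as r.+1 with r : 'I_eta),
   i over 1..m (as i.+1 with i : 'I_m). *)
Definition neg_ex (V : finType) (m : nat) (edges : 'I_m -> {set V})
  (r : nat) (i : 'I_m) : example V :=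
  (fun f => match f with
            | None => Posz (2 * m * (r.+1 - 1) + 2 * i.+1 - 1)%N
            | Some v => if v \in edges i then 1%Z else 0%Z
            end, false).

Definition pos_ex (V : finType) (m : nat) (r : nat) (i : 'I_m) : example V :=
  (fun f => match f with
            | None => Posz (2 * m * (r.+1 - 1) + 2 * i.+1)%N
            | Some _ => 0%Z
            end, true).

Definition instance_E (V : finType) (m : nat) (edges : 'I_m -> {set V})
  (eta : nat) : seq (example V) :=
  flatten [seq [:: neg_ex edges r i; pos_ex V r i]
          | r <- iota 0 eta, i <- enum 'I_m].

Definition num_incident (V : finType) (m : nat) (edges : 'I_m -> {set V})
  (U : {set V}) : nat :=
  #|[set i : 'I_m | edges i :&: U != set0]|.

From mathcomp Require Import all_boot all_order all_algebra.
From mathcomp Require Import zify.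
Set Implicit Arguments. Unset Strict Implicit. Unset Printing Implicit Defensive.
Import Order.TTheory GRing.Theory Num.Theory.

(* If U covers p edges, the tree testing "all features of U are 0" makes only
   the negative examples of the m - p uncovered edges misclassified, once per
   block r.  Conversely, a tree of depth at most k has fewer than 2^k
   thresholds on d_0, and each of them separates the examples of at most one
   block; in any other block every example takes the same d_0 branches as
   [d_0 = 2m(r-1)+1, all vertices 0], so the tree behaves there like a chain
   on the at most k vertices tested along that path.  If no such set covers p
   edges, each of these more than 2^k (l+1) blocks contributes at least l+1
   outliers, and (l+1)(2^k (l+1) + 1) > l 2^k (l+2). *)

Section TreePaths.
Variable V : finType.
Implicit Types (T : DT (feature V)) (x y : feature V -> int).

Fixpoint d0_thresholds T : seq int :=
  match T with
  | Leaf _ => [::]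
  | Node None t l r => t :: (d0_thresholds l ++ d0_thresholds r)
  | Node (Some _) _ l r => d0_thresholds l ++ d0_thresholds r
  end.

Fixpoint path_vertices T x : {set V} :=
  match T with
  | Leaf _ => set0
  | Node f t l r =>
    let rest := if (x f <= t)%R then path_vertices l x else path_vertices r x in
    if f is Some v then v |: rest else rest
  end.

Lemma card_path_vertices T x : #|path_vertices T x| <= dep T.
Proof.
elim: T => [b|f t l IHl r IHr] /=; first by rewrite cards0.
have Hrest : #|if (x f <= t)%R then path_vertices l x else path_vertices r x|
             <= maxn (dep l) (dep r).
  by case: ifP => _; [exact: leq_trans IHl (leq_maxl _ _)
                     | exact: leq_trans IHr (leq_maxr _ _)].
case: f Hrest => [v|] Hrest; last exact: leq_trans Hrest _.
by rewrite cardsU1; lia.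
Qed.

Lemma size_d0_thresholds T : size (d0_thresholds T) < 2 ^ dep T.
Proof.
elim: T => [b|f t l IHl r IHr] //=.
have Hl : 2 ^ dep l <= 2 ^ maxn (dep l) (dep r) by rewrite leq_pexp2l // leq_maxl.
have Hr : 2 ^ dep r <= 2 ^ maxn (dep l) (dep r) by rewrite leq_pexp2l // leq_maxr.
by rewrite expnS; case: f => [v|] /=; rewrite size_cat; lia.
Qed.

Lemma classify_eq_on_path T x y :
  (forall lam, lam \in d0_thresholds T -> (x None <= lam)%R = (y None <= lam)%R) ->
  {in path_vertices T x, forall v, x (Some v) = y (Some v)} ->
  classify T y = classify T x.
Proof.
elim: T => [b|f t l IHl r IHr] //= Hth Hpath.
have Hf : (y f <= t)%R = (x f <= t)%R.
  case: f Hth Hpath => [v|] Hth Hpath; last by rewrite Hth ?mem_head.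
  by rewrite Hpath // setU11.
rewrite Hf; case: ifP => Hc; [apply: IHl | apply: IHr] => [lam Hlam|v Hv|lam Hlam|v Hv].
- by apply: Hth; case: f {Hf Hpath Hc}; rewrite /= ?in_cons mem_cat Hlam ?orbT.
- by apply: Hpath; rewrite Hc; case: f {Hf Hth Hc} => [?|] //; exact: setU1r.
- by apply: Hth; case: f {Hf Hpath Hc}; rewrite /= ?in_cons mem_cat Hlam ?orbT.
- by apply: Hpath; rewrite Hc; case: f {Hf Hth Hc} => [?|] //; exact: setU1r.
Qed.

End TreePaths.

Definition chain_tree (V : finType) (s : seq V) : DT (feature V) :=
  foldr (fun v T => Node (Some v) 0%R T (Leaf false)) (Leaf true) s.

Lemma dep_chain_tree (V : finType) (s : seq V) : dep (chain_tree s) = size s.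
Proof. by elim: s => //= v s ->; rewrite maxn0. Qed.

Lemma classify_chain_tree (V : finType) (s : seq V) x :
  classify (chain_tree s) x = all (fun v => x (Some v) <= 0)%R s.
Proof. by elim: s => //= v s <-; case: ifP. Qed.

Lemma count_flatten_pairs (A B : Type) (a : pred B) (f g : A -> B) (s : seq A) :
  count a (flatten [seq [:: f x; g x] | x <- s]) = count (a \o f) s + count (a \o g) s.
Proof. by elim: s => //= x s ->; case: (a (f x)); case: (a (g x)) => /=; lia. Qed.

Lemma count_le1 (A : eqType) (P : pred A) (s : seq A) :
  uniq s -> (forall a b, P a -> P b -> a = b) -> count P s <= 1.
Proof.
move=> us HP; rewrite -size_filter.
have {}HP : {in filter P s &, forall a b, a = b}.
  by move=> a b; rewrite !mem_filter => /andP[Pa _] /andP[Pb _]; exact: HP.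
have := filter_uniq P us.
case: (filter P s) HP => [|a [|b t]] //= HP /andP[].
by rewrite in_cons (HP a b) ?eqxx // !in_cons eqxx ?orbT.
Qed.

Lemma count_has_le_size (A : eqType) (B : Type) (R : A -> B -> bool)
    (s : seq A) (t : seq B) :
  uniq s -> (forall b a1 a2, R a1 b -> R a2 b -> a1 = a2) ->
  count (fun a => has (R a) t) s <= size t.
Proof.
move=> us Rinj; elim: t => [|b t IH] /=; first by rewrite count_pred0.
have Hb := count_le1 (P := R^~ b) us (Rinj b).
have HUI := count_predUI (R^~ b) (fun a => has (R a) t) s.
by change (count (predU (R^~ b) (fun a => has (R a) t)) s <= (size t).+1); lia.
Qed.

Lemma sum_ge_count (A : Type) (P : pred A) (f : A -> nat) (c : nat) (s : seq A) :
  (forall x, P x -> c <= f x) -> c * count P s <= \sum_(x <- s) f x.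
Proof.
move=> Hf; rewrite -sum1_count big_distrr /= muln1.
rewrite [X in _ <= X](bigID P) /=; apply: leq_trans (leq_addr _ _).
exact: leq_sum.
Qed.

Lemma count_enum (T : finType) (P : pred T) : count P (enum T) = #|P|.
Proof.
rewrite cardE /enum_mem size_filter count_filter.
by apply: eq_count => x; rewrite /= andbT.
Qed.

Section Instance.
Variables (V : finType) (m : nat) (edges : 'I_m -> {set V}).
Implicit Type T : DT (feature V).

Definition block_examples (r : nat) : seq (example V) :=
  flatten [seq [:: neg_ex edges r i; pos_ex V r i] | i <- enum 'I_m].

Lemma num_outliers_instance T eta :
  num_outliers T (instance_E edges eta) =
  \sum_(0 <= r < eta) num_outliers T (block_examples r).
Proof.
rewrite /num_outliers /instance_E /index_iota subn0.
elim: (iota 0 eta) => [|r s IH]; first by rewrite big_nil.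
by rewrite allpairs_cons flatten_cat count_cat IH big_cons.
Qed.

Lemma num_outliers_block T r :
  num_outliers T (block_examples r) =
  count (fun i => classify T (neg_ex edges r i).1) (enum 'I_m) +
  count (fun i => ~~ classify T (pos_ex V r i).1) (enum 'I_m).
Proof.
rewrite /num_outliers count_flatten_pairs.
by congr (_ + _); apply: eq_count => i; rewrite /= /is_outlier /=; case: classify.
Qed.

Lemma count_avoiding_edges (U : {set V}) :
  count (fun i => edges i :&: U == set0) (enum 'I_m) = m - num_incident edges U.
Proof.
rewrite count_enum /num_incident -[X in X - _](card_ord m).
rewrite -(cardsC [set i | edges i :&: U != set0]) addKn.
by apply: eq_card => i; rewrite !inE negbK.
Qed.

Lemma num_outliers_chain (U : {set V}) eta :
  num_outliers (chain_tree (enum U)) (instance_E edges eta) =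
  eta * (m - num_incident edges U).
Proof.
rewrite num_outliers_instance -[eta in RHS]subn0 -sum_nat_const_nat.
apply: eq_bigr => r _; rewrite num_outliers_block -count_avoiding_edges.
have -> : count (fun i => ~~ classify (chain_tree (enum U)) (pos_ex V r i).1)
                (enum 'I_m) = 0.
  rewrite -(count_pred0 (enum 'I_m)); apply: eq_count => i.
  by rewrite classify_chain_tree; apply/negbF/allP.
rewrite addn0; apply: eq_count => i; rewrite classify_chain_tree.
apply/allP/eqP => [Hall | Hdisj v].
- apply/setP => v; rewrite !inE; apply/negP => /andP[ve vU].
  by have := Hall v; rewrite mem_enum /= ve => /(_ vU).
- rewrite mem_enum /= => vU; case: ifP => // ve.
  by have := in_set0 v; rewrite -Hdisj inE ve vU.
Qed.

(* The d_0 values of block r (the paper's r+1) fill [2mr+1, 2mr+2m]; the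
   threshold lam splits the block when it sends some of them left and some
   right. *)
Definition splits_block (r : nat) (lam : int) : bool :=
  (Posz (2 * m * r + 1) <= lam)%R && (lam < Posz (2 * m * r + 2 * m))%R.

Lemma splits_block_inj lam r1 r2 :
  splits_block r1 lam -> splits_block r2 lam -> r1 = r2.
Proof.
case: lam => [n|n] //; rewrite /splits_block !lez_nat !ltz_nat.
move=> /andP[lo1 hi1] /andP[lo2 hi2].
wlog lt12 : r1 r2 lo1 hi1 lo2 hi2 / r1 < r2.
  move=> Hwlog; case: (ltngtP r1 r2) => // [/Hwlog | /Hwlog ->] //; exact.
have : 2 * m * r1 + 2 * m <= 2 * m * r2 by rewrite -mulnSr leq_mul2l lt12 orbT.
lia.
Qed.

Lemma le_threshold_unsplit r lam d :
  ~~ splits_block r lam -> 2 * m * r + 1 <= d <= 2 * m * r + 2 * m ->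
  (Posz d <= lam)%R = (Posz (2 * m * r + 1) <= lam)%R.
Proof.
case: lam => [n|n] //; rewrite /splits_block !lez_nat ltz_nat => Hn Hd.
by apply/idP/idP; lia.
Qed.

Definition block_anchor (r : nat) : feature V -> int :=
  fun f => if f is None then Posz (2 * m * r + 1) else 0%R.

Lemma classify_as_block_anchor T r x :
  ~~ has (splits_block r) (d0_thresholds T) ->
  (exists2 d, 2 * m * r + 1 <= d <= 2 * m * r + 2 * m & x None = Posz d) ->
  {in path_vertices T (block_anchor r), forall v, x (Some v) = 0%R} ->
  classify T x = classify T (block_anchor r).
Proof.
move=> /hasPn unsplit [d Hd Hx0] Hzero.
apply: classify_eq_on_path => [lam Hlam | v Hv]; last by rewrite Hzero.
by rewrite Hx0 (le_threshold_unsplit (unsplit lam Hlam) Hd).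
Qed.

Lemma unsplit_block_outliers T k r p :
  p <= m -> dep T <= k ->
  (forall U : {set V}, #|U| <= k -> num_incident edges U < p) ->
  ~~ has (splits_block r) (d0_thresholds T) ->
  (m - p).+1 <= num_outliers T (block_examples r).
Proof.
move=> Hpm HdT Hcover unsplit; set U := path_vertices T (block_anchor r).
have HUp := Hcover U (leq_trans (card_path_vertices _ _) HdT).
have in_block (i : 'I_m) c : c <= 1 ->
    2 * m * r + 1 <= 2 * m * (r.+1 - 1) + 2 * i.+1 - c <= 2 * m * r + 2 * m.
  by rewrite subSS subn0 => c1; have := ltn_ord i; lia.
rewrite num_outliers_block; case Hanchor: (classify T (block_anchor r)).
- apply: leq_trans (leq_addr _ _).
  apply: (@leq_trans (m - num_incident edges U)); first lia.
  rewrite -count_avoiding_edges; apply: sub_count => i /eqP disj /=.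
  rewrite (@classify_as_block_anchor T r) ?Hanchor //.
    by exists (2 * m * (r.+1 - 1) + 2 * i.+1 - 1); [exact: (in_block i 1)|].
  move=> v vU /=; case: ifP => // ve.
  by have := in_set0 v; rewrite -disj inE ve vU.
- apply: leq_trans (leq_addl _ _).
  have -> : count (fun i => ~~ classify T (pos_ex V r i).1) (enum 'I_m) = m.
    rewrite -[RHS]size_enum_ord -count_predT; apply: eq_count => i.
    rewrite (@classify_as_block_anchor T r) ?Hanchor //.
    exists (2 * m * (r.+1 - 1) + 2 * i.+1) => //.
    by rewrite -[X in _ <= X <= _]subn0; exact: in_block.
  lia.
Qed.

Lemma count_split_blocks T (s : seq nat) : uniq s ->
  count (fun r => has (splits_block r) (d0_thresholds T)) s < 2 ^ dep T.
Proof.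
move=> us; apply: leq_ltn_trans (size_d0_thresholds T).
by apply: count_has_le_size us _ => lam r1 r2; exact: splits_block_inj.
Qed.

Lemma num_outliers_without_cover T k p :
  p <= m -> dep T <= k ->
  (forall U : {set V}, #|U| <= k -> num_incident edges U < p) ->
  (m - p) * (2 ^ k * (m - p + 2)) <
  num_outliers T (instance_E edges (2 ^ k * (m - p + 2))).
Proof.
move=> Hpm HdT Hcover.
set l := m - p; set K := 2 ^ k; set eta := K * (l + 2).
pose split r := has (splits_block r) (d0_thresholds T).
have Hsplit : count split (index_iota 0 eta) < K.
  by apply: leq_trans (count_split_blocks T (iota_uniq 0 _)) _; rewrite leq_pexp2l.
have Hunsplit : l.+1 * count (predC split) (index_iota 0 eta)
                <= num_outliers T (instance_E edges eta).
  rewrite num_outliers_instance; apply: sum_ge_count => r.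
  exact: unsplit_block_outliers Hpm HdT Hcover.
have Hsum := count_predC split (index_iota 0 eta).
rewrite size_iota subn0 in Hsum.
have Hcu : K * l.+1 < count (predC split) (index_iota 0 eta).
  by move: Hsplit Hsum; rewrite /eta; lia.
have Hpoly (n c : nat) : n * (c * (n + 2)) < n.+1 * (c * n.+1).+1 by nia.
apply: leq_trans (Hpoly l K) (leq_trans _ Hunsplit).
by rewrite leq_mul2l Hcu orbT.
Qed.

End Instance.

Theorem lemma5 (V : finType) (m : nat) (edges : 'I_m -> {set V})
  (HG : simple_graph edges) (Hm : (1 <= m)%N) (k p : nat)
  (Hk : (1 <= k)%N) (Hp : (p <= m)%N) :
  let l := (m - p)%N in
  let eta := (2 ^ k * (l + 2))%N in
  (exists U : {set V}, (#|U| <= k)%N /\ (p <= num_incident edges U)%N) <->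
  (exists T : DT (feature V),
      (dep T <= k)%N /\ (num_outliers T (instance_E edges eta) <= l * eta)%N).
Proof.
move=> l eta; split.
- case=> U [HU HpU]; exists (chain_tree (enum U)); split.
    by rewrite dep_chain_tree -cardE.
  by rewrite num_outliers_chain mulnC leq_mul2r leq_sub2l ?orbT.
- case=> T [HdT HoT].
  case: (boolP [exists U : {set V}, (#|U| <= k) && (p <= num_incident edges U)]).
    by move=> /existsP[U /andP[HU HpU]]; exists U.
  move=> Hnone; have Hcover (U : {set V}) : #|U| <= k -> num_incident edges U < p.
    move=> HU; rewrite ltnNge; apply: contra Hnone => HpU.
    by apply/existsP; exists U; rewrite HU HpU.
  have := num_outliers_without_cover Hp HdT Hcover.
  by rewrite -/l -/eta ltnNge HoT.
Qed.
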